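(* Let $f=(f_1,f_2):\mathbb{R}\times\mathbb{R}^2,\mathbf 0\to\mathbb{R}^2,\mathbf 0$ be an analytic germ, $f_t(x)=f(t,x)$, $J=\partial(f_1,f_2)/\partial(x_1,x_2)$, $F_i=\partial(f_i,J)/\partial(x_1,x_2)$, and assume $$\dim_{\mathbb{R}}\mathcal{O}_3/\langle t,f_1,f_2\rangle<\infty,\ \dim_{\mathbb{R}}\mathcal{O}_3/\langle t,F_1,F_2\rangle<\infty,\ J(\mathbf{0})=0,\ \dim_{\mathbb{R}}\mathcal{O}_3/\langle t,\partial J/\partial x_1,\partial J/\partial x_2\rangle<\infty,$$ and that $V(I')=\{\mathbf 0\}$, where $I'=\langle J,F_1,F_2,\partial(F_1,J)/\partial(x_1,x_2),\partial(F_2,J)/\partial(x_1,x_2)\rangle$. Let $r_0>0$ with $f_0^{-1}(\mathbf 0)\cap D^2(r_0)=\{\mathbf 0\}$, $\tilde D^2_t(\delta)=f_t^{-1}(D^2(\delta))\cap D^2(r_0)$, let $V(I)$ be a representative of the zero germ of $I=\langle J,F_1,F_2\rangle$, and $\Sigma_t=\{x\in\tilde D^2_t(\delta):(t,x)\in V(I)\}$. Suppose $0<\delta\ll1$ and $t\neq0$ is sufficiently close to zero. Then the set of critical points of $f_t:\tilde D^2_t(\delta)\to D^2(\delta)$ consists of fold points and the finite family $\Sigma_t$ of cusp points.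
   Context: $\mathcal{O}_3=\mathbb{R}\{t,x_1,x_2\}$; $V(\cdot)$ denotes real zero sets near the origin. $D^2(\rho)$ is the closed disc of radius $\rho$. Fold and cusp points are in Whitney's sense. *)

From Stdlib Require Import Reals List.
From Coquelicot Require Import Coquelicot.
Open Scope R_scope.

Definition fn3 := R -> R -> R -> R.

Definition near0 (P : R -> R -> R -> Prop) : Prop :=
  exists e, 0 < e /\ forall t x1 x2,
    Rabs t < e -> Rabs x1 < e -> Rabs x2 < e -> P t x1 x2.

(* Degree-n homogeneous part of the power series sum a_{ijk} t^i x1^j x2^k. *)
Definition homog3 (a : nat -> nat -> nat -> R) (t x1 x2 : R) (n : nat) : R :=
  sum_f_R0 (fun i => sum_f_R0 (fun j =>
     a i j (n - i - j)%nat * t ^ i * x1 ^ j * x2 ^ (n - i - j)) (n - i)) n.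

(* g is (a representative of) an element of O_3 = R{t,x1,x2}:
   g is given near 0 by an absolutely convergent power series. *)
Definition analytic0 (g : fn3) : Prop :=
  exists (a : nat -> nat -> nat -> R) (r : R), 0 < r /\
    forall t x1 x2, Rabs t < r -> Rabs x1 < r -> Rabs x2 < r ->
      ex_series (homog3 (fun i j k => Rabs (a i j k)) (Rabs t) (Rabs x1) (Rabs x2))
      /\ is_series (homog3 a t x1 x2) (g t x1 x2).

Fixpoint lcomb (cs : list R) (hs : list fn3) (t x1 x2 : R) : R :=
  match cs, hs with
  | c :: cs', h :: hs' => c * h t x1 x2 + lcomb cs' hs' t x1 x2
  | _, _ => 0
  end.
Fixpoint icomb (qs gs : list fn3) (t x1 x2 : R) : R :=
  match qs, gs with
  | q :: qs', g :: gs' => q t x1 x2 * g t x1 x2 + icomb qs' gs' t x1 x2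
  | _, _ => 0
  end.

(* dim_R O_3 / <gs> < infinity : finitely many germs hs span the quotient,
   i.e. every germ g is congruent modulo the ideal <gs> to an R-linear
   combination of the hs (equality of germs at the origin). *)
Definition finite_codim (gs : list fn3) : Prop :=
  exists hs : list fn3, List.Forall analytic0 hs /\
    forall g, analytic0 g ->
      exists (cs : list R) (qs : list fn3),
        length cs = length hs /\ length qs = length gs /\ List.Forall analytic0 qs /\
        near0 (fun t x1 x2 => g t x1 x2 = lcomb cs hs t x1 x2 + icomb qs gs t x1 x2).

Definition tcoord : fn3 := fun t _ _ => t.

Definition dx1 (g : fn3) : fn3 := fun t x1 x2 => Derive (fun y => g t y x2) x1.
Definition dx2 (g : fn3) : fn3 := fun t x1 x2 => Derive (fun y => g t x1 y) x2.
Definition jac (g h : fn3) : fn3 :=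
  fun t x1 x2 => dx1 g t x1 x2 * dx2 h t x1 x2 - dx2 g t x1 x2 * dx1 h t x1 x2.

Definition inD (r x1 x2 : R) : Prop := x1 ^ 2 + x2 ^ 2 <= r ^ 2.

Definition pd1 (g : R -> R -> R) : R -> R -> R := fun x1 x2 => Derive (fun y => g y x2) x1.
Definition pd2 (g : R -> R -> R) : R -> R -> R := fun x1 x2 => Derive (fun y => g x1 y) x2.
Definition jac2 (g h : R -> R -> R) : R -> R -> R :=
  fun x1 x2 => pd1 g x1 x2 * pd2 h x1 x2 - pd2 g x1 x2 * pd1 h x1 x2.

Definition critical_pt (g1 g2 : R -> R -> R) (x1 x2 : R) : Prop :=
  jac2 g1 g2 x1 x2 = 0.

Definition good_pt (g1 g2 : R -> R -> R) (x1 x2 : R) : Prop :=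
  critical_pt g1 g2 x1 x2 /\
  ~ (pd1 (jac2 g1 g2) x1 x2 = 0 /\ pd2 (jac2 g1 g2) x1 x2 = 0).

(* Whitney fold point: good, and the derivative of g along the critical curve
   (direction field (J_x2, -J_x1)), i.e. (d(g1,J)/d(x1,x2), d(g2,J)/d(x1,x2)),
   is nonzero. *)
Definition fold_pt (g1 g2 : R -> R -> R) (x1 x2 : R) : Prop :=
  good_pt g1 g2 x1 x2 /\
  ~ (jac2 g1 (jac2 g1 g2) x1 x2 = 0 /\ jac2 g2 (jac2 g1 g2) x1 x2 = 0).

(* Whitney cusp point: good, the first derivative of g along the critical curve
   vanishes and the second one does not. *)
Definition cusp_pt (g1 g2 : R -> R -> R) (x1 x2 : R) : Prop :=
  let J := jac2 g1 g2 in
  good_pt g1 g2 x1 x2 /\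
  jac2 g1 J x1 x2 = 0 /\ jac2 g2 J x1 x2 = 0 /\
  ~ (jac2 (jac2 g1 J) J x1 x2 = 0 /\ jac2 (jac2 g2 J) J x1 x2 = 0).

(* Analyticity enters only through joint continuity of f and C^3-smoothness of the
   slices f_t, both read off the power series (Weierstrass M-test, termwise
   differentiation).  Since V(I') = {0}, for t <> 0 a critical point of f_t outside V(I)
   has (F1, F2) <> 0 (Whitney's fold condition) and a point of V(I) has
   (d(F1,J), d(F2,J)) <> 0 (the cusp condition); dJ <> 0 holds in both cases because
   F_i and d(F_i,J) vanish wherever dJ does.  By compactness and
   f_0^{-1}(0) ∩ D(r0) = {0}, for small delta and t the domain ~D_t(delta) lies in any
   prescribed neighbourhood of 0, where V(I) is the zero set of J, F1, F2.  Finally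
   Sigma_t is finite: an accumulation point is a common zero of J and some F_i with
   d(F_i,J) <> 0, hence isolated by the linear approximation, and a bounded set without
   accumulation points is finite (bisection of squares). *)

From Stdlib Require Import Reals List Lra Lia Psatz Ranalysis5 Classical ClassicalEpsilon.
From Coquelicot Require Import Coquelicot.
Open Scope R_scope.

(** * Power series in three variables *)

Definition abs_coef (a : nat -> nat -> nat -> R) : nat -> nat -> nat -> R :=
  fun i j k => Rabs (a i j k).
Definition coef_dx1 (a : nat -> nat -> nat -> R) : nat -> nat -> nat -> R :=
  fun i j k => INR (S j) * a i (S j) k.
Definition coef_swap (a : nat -> nat -> nat -> R) : nat -> nat -> nat -> R :=
  fun i j k => a i k j.

Lemma Rle_plus_nonneg_r a b c : a <= b -> 0 <= c -> a <= b + c.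
Proof. lra. Qed.

Lemma homog3_abs_coef_ge0 a s n : 0 <= s -> 0 <= homog3 (abs_coef a) s s s n.
Proof.
  intros hs. unfold homog3, abs_coef.
  apply cond_pos_sum; intro i; apply cond_pos_sum; intro j.
  pose proof (Rabs_pos (a i j (n - i - j)%nat)).
  repeat apply Rmult_le_pos; try apply pow_le; lra.
Qed.

Lemma homog3_abs_le a t x1 x2 s n :
  Rabs t <= s -> Rabs x1 <= s -> Rabs x2 <= s ->
  Rabs (homog3 a t x1 x2 n) <= homog3 (abs_coef a) s s s n.
Proof.
  intros ht h1 h2. unfold homog3, abs_coef.
  eapply Rle_trans; [apply sum_f_R0_triangle|]. apply sum_Rle; intros i _.
  eapply Rle_trans; [apply sum_f_R0_triangle|]. apply sum_Rle; intros j _.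
  rewrite !Rabs_mult, <- !RPow_abs.
  pose proof (Rabs_pos t); pose proof (Rabs_pos x1); pose proof (Rabs_pos x2).
  pose proof (Rabs_pos (a i j (n - i - j)%nat)).
  repeat apply Rmult_le_compat; repeat apply Rmult_le_pos;
    try apply pow_le; try apply pow_incr; lra.
Qed.

Lemma homog3_diag b s n : homog3 b s s s n = s ^ n * homog3 b 1 1 1 n.
Proof.
  unfold homog3. rewrite scal_sum. apply sum_eq; intros i hi.
  rewrite (Rmult_comm (sum_f_R0 _ _)), scal_sum. apply sum_eq; intros j hj.
  rewrite !pow1. replace n with (i + j + (n - i - j))%nat at 4 by lia.
  rewrite !pow_add. ring.
Qed.

Lemma homog3_coef_dx1_le a n :
  homog3 (abs_coef (coef_dx1 a)) 1 1 1 n <= INR (S n) * homog3 (abs_coef a) 1 1 1 (S n).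
Proof.
  unfold homog3, abs_coef, coef_dx1. rewrite (tech5 _ n), Rmult_plus_distr_l, scal_sum.
  apply Rle_plus_nonneg_r; [|apply Rmult_le_pos; [apply pos_INR|];
    apply cond_pos_sum; intro j; rewrite !pow1, !Rmult_1_r; apply Rabs_pos].
  apply sum_Rle; intros i hi.
  replace (S n - i)%nat with (S (n - i)) by lia.
  rewrite (decomp_sum _ (S (n - i))) by lia; simpl pred.
  rewrite Rmult_plus_distr_r, Rplus_comm.
  apply Rle_plus_nonneg_r;
    [|rewrite !pow1, !Rmult_1_r; apply Rmult_le_pos; [apply Rabs_pos|apply pos_INR]].
  rewrite Rmult_comm, scal_sum. apply sum_Rle; intros j hj.
  rewrite !pow1, !Rmult_1_r.
  replace (S (n - i) - S j)%nat with (n - i - j)%nat by lia.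
  rewrite Rabs_mult, Rabs_right by (apply Rle_ge, pos_INR).
  rewrite Rmult_comm. apply Rmult_le_compat_l; [apply Rabs_pos|]. apply le_INR; lia.
Qed.

Lemma sum_f_R0_rev (f : nat -> R) N : sum_f_R0 (fun j => f (N - j)%nat) N = sum_f_R0 f N.
Proof.
  revert f; induction N as [|N IH]; intros f; [reflexivity|].
  rewrite (decomp_sum _ (S N)) by lia; simpl pred.
  rewrite tech5, <- (IH f), Nat.sub_0_r, Rplus_comm. reflexivity.
Qed.

Lemma homog3_swap a t x1 x2 n : homog3 (coef_swap a) t x2 x1 n = homog3 a t x1 x2 n.
Proof.
  unfold homog3, coef_swap. apply sum_eq; intros i hi.
  rewrite <- sum_f_R0_rev. apply sum_eq; intros j hj.
  replace (n - i - (n - i - j))%nat with j by lia. ring.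
Qed.

Lemma is_derive_sum_f_R0 (F : nat -> R -> R) (F' : nat -> R) y n :
  (forall m, (m <= n)%nat -> is_derive (F m) y (F' m)) ->
  is_derive (fun z => sum_f_R0 (fun m => F m z) n) y (sum_f_R0 F' n).
Proof.
  induction n as [|n IH]; intros H; simpl; [apply H; lia|].
  apply (is_derive_plus (fun z => sum_f_R0 (fun m => F m z) n) (F (S n))).
  - apply IH; intros; apply H; lia.
  - apply H; lia.
Qed.

Lemma is_derive_homog3_x1_O a t x2 y : is_derive (fun z => homog3 a t z x2 0) y 0.
Proof. unfold homog3; simpl. auto_derive; auto; ring. Qed.

Lemma is_derive_homog3_x1_S a t x2 y m :
  is_derive (fun z => homog3 a t z x2 (S m)) y (homog3 (coef_dx1 a) t y x2 m).
Proof.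
  replace (homog3 (coef_dx1 a) t y x2 m) with (sum_f_R0 (fun i => sum_f_R0 (fun j =>
      a i j (S m - i - j)%nat * t ^ i * (INR j * y ^ pred j) * x2 ^ (S m - i - j))
      (S m - i)) (S m)).
  { apply is_derive_sum_f_R0; intros i _. apply is_derive_sum_f_R0; intros j _.
    set (k := (S m - i - j)%nat). auto_derive; [auto|]. ring. }
  unfold homog3.
  rewrite tech5.
  match goal with |- _ + ?B = _ => replace B with 0 by (rewrite Nat.sub_diag; simpl; ring) end.
  rewrite Rplus_0_r. apply sum_eq; intros i hi.
  replace (S m - i)%nat with (S (m - i)) by lia.
  rewrite (decomp_sum _ (S (m - i))) by lia.
  match goal with |- ?A + _ = _ => replace A with 0 by (simpl; ring) end.
  rewrite Rplus_0_l. apply sum_eq; intros j hj. unfold coef_dx1.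
  replace (S (m - i) - S j)%nat with (m - i - j)%nat by lia. simpl pred. ring.
Qed.

Lemma ex_series_Rabs_dominated (b B : nat -> R) :
  (forall m, Rabs (b m) <= B m) -> ex_series B -> ex_series (fun m => Rabs (b m)).
Proof.
  intros hb hB. refine (ex_series_le (V := R_CompleteNormedModule) _ B _ hB).
  intros m; change (norm (Rabs (b m))) with (Rabs (Rabs (b m))); rewrite Rabs_Rabsolu; apply hb.
Qed.

Lemma Series_minus_partial_le (b B : nat -> R) n :
  (forall m, Rabs (b m) <= B m) -> ex_series B ->
  Rabs (Series b - sum_f_R0 b n) <= Series B - sum_f_R0 B n.
Proof.
  intros hb hB. pose proof (ex_series_Rabs_dominated b B hb hB) as hbB.
  rewrite (Series_incr_n b (S n)), (Series_incr_n B (S n)); simpl pred;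
    [|lia|auto|lia|apply ex_series_Rabs; auto].
  replace (sum_f_R0 b n + _ - sum_f_R0 b n) with (Series (fun k => b (S n + k)%nat)) by ring.
  replace (sum_f_R0 B n + _ - sum_f_R0 B n) with (Series (fun k => B (S n + k)%nat)) by ring.
  eapply Rle_trans; [apply Series_Rabs, (ex_series_incr_n (fun m => Rabs (b m)) (S n)); auto|].
  apply Series_le; [intros m; split; [apply Rabs_pos|apply hb]|].
  apply (ex_series_incr_n B (S n)); auto.
Qed.

Lemma Series_minus_partial_small (B : nat -> R) : ex_series B ->
  forall eps, 0 < eps -> exists N, forall n, (N <= n)%nat -> Series B - sum_f_R0 B n < eps.
Proof.
  intros hB eps heps.
  destruct (proj1 (is_series_Reals _ _) (Series_correct _ hB) eps heps) as [N HN].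
  exists N; intros n hn. specialize (HN n hn). unfold R_dist in HN.
  rewrite Rabs_minus_sym in HN. apply Rabs_def2 in HN. lra.
Qed.

Lemma continuity_pt_sum_f_R0 (F : nat -> R -> R) y n :
  (forall m, continuity_pt (F m) y) -> continuity_pt (fun z => sum_f_R0 (fun m => F m z) n) y.
Proof.
  intros H; induction n as [|n IH]; [apply H|].
  apply (continuity_pt_plus (fun z => sum_f_R0 (fun m => F m z) n) (F (S n))); auto.
Qed.

Lemma is_derive_Series_dominated (H H' : nat -> R -> R) (B : nat -> R) (f : R -> R) s x :
  Rabs x < s ->
  (forall y, Rabs y < s -> is_series (fun n => H n y) (f y)) ->
  (forall n y, is_derive (H n) y (H' n y)) ->
  (forall n y, continuity_pt (H' n) y) ->
  (forall n y, Rabs y < s -> Rabs (H' n y) <= B n) -> ex_series B ->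
  is_derive f x (Series (fun n => H' n x)).
Proof.
  intros hx hser hder hcont hB exB.
  assert (hs : 0 < s) by (pose proof (Rabs_pos x); lra).
  set (r := mkposreal s hs).
  assert (ball0 : forall y, Boule 0 r y -> Rabs y < s).
  { intros y hy; unfold Boule in hy; simpl in hy; rewrite Rminus_0_r in hy; exact hy. }
  assert (CV : CVU (fun n y => sum_f_R0 (fun k => H' k y) n) (fun y => Series (fun k => H' k y)) 0 r).
  { intros eps heps. destruct (Series_minus_partial_small B exB eps heps) as [N HN].
    exists N; intros n y hn hy.
    eapply Rle_lt_trans; [apply Series_minus_partial_le|]; auto. }
  apply is_derive_Reals.
  apply (derivable_pt_lim_CVU (fun n y => sum_f_R0 (fun k => H k y) n)
           (fun n y => sum_f_R0 (fun k => H' k y) n) f (fun y => Series (fun k => H' k y)) x 0 r).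
  - unfold Boule; simpl; rewrite Rminus_0_r; exact hx.
  - intros y n _. apply is_derive_Reals, is_derive_sum_f_R0; auto.
  - intros y hy. apply is_series_Reals, hser, ball0, hy.
  - exact CV.
  - intros y hy. apply (CVU_continuity _ _ 0 r CV); auto.
    intros n z _. apply continuity_pt_sum_f_R0; auto.
Qed.

Definition box (r t x1 x2 : R) : Prop := Rabs t < r /\ Rabs x1 < r /\ Rabs x2 < r.

Lemma box_margin r t x1 x2 : box r t x1 x2 ->
  exists s, 0 <= s < r /\ Rabs t < s /\ Rabs x1 < s /\ Rabs x2 < s.
Proof.
  intros (ht & h1 & h2).
  set (M := Rmax (Rabs t) (Rmax (Rabs x1) (Rabs x2))).
  assert (Rabs t <= M) by apply Rmax_l.
  assert (Rabs x1 <= M /\ Rabs x2 <= M) as [].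
  { pose proof (Rmax_r (Rabs t) (Rmax (Rabs x1) (Rabs x2))).
    pose proof (Rmax_l (Rabs x1) (Rabs x2)); pose proof (Rmax_r (Rabs x1) (Rabs x2)).
    unfold M; lra. }
  assert (M < r) by (unfold M; repeat apply Rmax_lub_lt; auto).
  pose proof (Rabs_pos t).
  exists ((M + r) / 2); repeat split; lra.
Qed.

Definition coef_conv (rho : R) (a : nat -> nat -> nat -> R) : Prop :=
  forall s, 0 <= s < rho -> ex_series (homog3 (abs_coef a) s s s).

Definition analytic_on (rho : R) (g : fn3) : Prop :=
  exists a, coef_conv rho a /\
    forall t x1 x2, box rho t x1 x2 -> is_series (homog3 a t x1 x2) (g t x1 x2).

Lemma analytic0_analytic_on g : analytic0 g -> exists rho, 0 < rho /\ analytic_on rho g.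
Proof.
  intros (a & r & hr & H). exists r; split; [exact hr|]. exists a; split.
  - intros s hs. destruct (H s s s) as [H1 _]; rewrite ?Rabs_pos_eq; try lra.
    rewrite Rabs_pos_eq in H1 by lra. exact H1.
  - intros t x1 x2 (h0 & h1 & h2). apply H; auto.
Qed.

Lemma analytic_on_le rho rho' g : 0 < rho' <= rho -> analytic_on rho g -> analytic_on rho' g.
Proof.
  intros h (a & hc & hs). exists a; split; [intros s ?; apply hc; lra|].
  intros t x1 x2 (h0 & h1 & h2). apply hs; repeat split; lra.
Qed.

Lemma analytic0_common_radius g1 g2 : analytic0 g1 -> analytic0 g2 ->
  exists rho, 0 < rho /\ analytic_on rho g1 /\ analytic_on rho g2.
Proof.
  intros h1 h2.
  destruct (analytic0_analytic_on g1 h1) as (r1 & hr1 & A1).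
  destruct (analytic0_analytic_on g2 h2) as (r2 & hr2 & A2).
  exists (Rmin r1 r2); split; [apply Rmin_pos; auto|].
  pose proof (Rmin_l r1 r2); pose proof (Rmin_r r1 r2); pose proof (Rmin_pos _ _ hr1 hr2).
  split; [apply analytic_on_le with r1|apply analytic_on_le with r2]; auto.
Qed.

Lemma Rbar_lt_CV_radius (c : nat -> R) s s' :
  0 <= s < s' -> ex_series (fun n => c n * s' ^ n) -> Rbar_lt s (CV_radius c).
Proof.
  intros hs hser.
  assert (Rbar_le (Rabs s') (CV_radius c)).
  { apply Rbar_not_lt_le; intros hlt.
    apply (CV_disk_outside c s' hlt), (ex_series_lim_0 _ hser). }
  rewrite Rabs_pos_eq in H by lra.
  destruct (CV_radius c) as [l| |]; simpl in *; lra || auto.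
Qed.

Lemma ex_series_coef_conv_derive rho a s : coef_conv rho a -> 0 <= s < rho ->
  ex_series (fun n => s ^ n * (INR (S n) * homog3 (abs_coef a) 1 1 1 (S n))).
Proof.
  intros hc hs.
  assert (Rbar_lt (Rabs s) (CV_radius (homog3 (abs_coef a) 1 1 1))).
  { rewrite Rabs_pos_eq by lra. apply Rbar_lt_CV_radius with ((s + rho) / 2); [lra|].
    eapply ex_series_ext; [|apply (hc ((s + rho) / 2)); lra].
    intros n; simpl. rewrite homog3_diag; ring. }
  eapply ex_series_ext; [|exact (ex_pseries_derive _ _ H)].
  intros n; simpl. rewrite pow_n_pow. reflexivity.
Qed.

Lemma coef_conv_dx1 rho a : coef_conv rho a -> coef_conv rho (coef_dx1 a).
Proof.
  intros hc s hs.
  refine (ex_series_le (V := R_CompleteNormedModule) _ _ _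
    (ex_series_coef_conv_derive rho a s hc hs)).
  intros n. change (norm ?x) with (Rabs x).
  rewrite Rabs_pos_eq by (apply homog3_abs_coef_ge0; lra).
  rewrite homog3_diag. apply Rmult_le_compat_l; [apply pow_le; lra|]. apply homog3_coef_dx1_le.
Qed.

Lemma analytic_on_swap rho g : analytic_on rho g -> analytic_on rho (fun t x1 x2 => g t x2 x1).
Proof.
  intros (a & hc & hs). exists (coef_swap a); split.
  - intros s hs'. eapply ex_series_ext; [|exact (hc s hs')].
    intros n. symmetry. apply (homog3_swap (abs_coef a)).
  - intros t x1 x2 (h0 & h1 & h2). eapply is_series_ext; [|apply hs; repeat split; eauto].
    intros n. symmetry. apply homog3_swap.
Qed.

Lemma ex_series_homog3 a t x1 x2 s :
  Rabs t <= s -> Rabs x1 <= s -> Rabs x2 <= s -> ex_series (homog3 (abs_coef a) s s s) ->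
  ex_series (homog3 a t x1 x2).
Proof.
  intros ht h1 h2 hs. apply ex_series_Rabs, (ex_series_Rabs_dominated _ _ (fun n =>
    homog3_abs_le a t x1 x2 s n ht h1 h2) hs).
Qed.

Lemma is_derive_Series_homog3_x1 a s t x1 x2 (h : R -> R) :
  ex_series (homog3 (abs_coef (coef_dx1 a)) s s s) ->
  Rabs t < s -> Rabs x1 < s -> Rabs x2 < s ->
  (forall y, Rabs y < s -> is_series (homog3 a t y x2) (h y)) ->
  is_derive h x1 (Series (homog3 (coef_dx1 a) t x1 x2)).
Proof.
  intros conv ht h1 h2 hh.
  set (H' := fun n y => match n with O => 0 | S m => homog3 (coef_dx1 a) t y x2 m end).
  replace (Series (homog3 (coef_dx1 a) t x1 x2)) with (Series (fun n => H' n x1)).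
  2:{ rewrite Series_incr_1; [apply Rplus_0_l|].
      apply ex_series_incr_1, (ex_series_homog3 _ _ _ _ s); auto; lra. }
  apply (is_derive_Series_dominated (fun n y => homog3 a t y x2 n) H'
    (fun n => match n with O => 0 | S m => homog3 (abs_coef (coef_dx1 a)) s s s m end) h s);
    [exact h1|exact hh| | | |apply ex_series_incr_1, conv].
  - intros [|m] y; [apply is_derive_homog3_x1_O|apply is_derive_homog3_x1_S].
  - intros [|m] y; [apply continuity_pt_const; intros ??; reflexivity|].
    apply derivable_continuous_pt. destruct m as [|m].
    + exists 0. apply is_derive_Reals, is_derive_homog3_x1_O.
    + eexists. apply is_derive_Reals, is_derive_homog3_x1_S.
  - intros [|m] y hy; [simpl; rewrite Rabs_R0; lra|apply homog3_abs_le; lra].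
Qed.

Lemma analytic_on_dx1 rho g : analytic_on rho g ->
  analytic_on rho (dx1 g) /\
  forall t x1 x2, box rho t x1 x2 -> is_derive (fun y => g t y x2) x1 (dx1 g t x1 x2).
Proof.
  intros (a & hc & hs).
  assert (dx1_series : forall t x1 x2, box rho t x1 x2 ->
    ex_series (homog3 (coef_dx1 a) t x1 x2) /\
    is_derive (fun y => g t y x2) x1 (Series (homog3 (coef_dx1 a) t x1 x2))).
  { intros t x1 x2 hb. destruct (box_margin _ _ _ _ hb) as (s & hsr & ht & h1 & h2).
    assert (conv := coef_conv_dx1 rho a hc s hsr).
    split; [apply (ex_series_homog3 _ _ _ _ s); auto; lra|].
    apply (is_derive_Series_homog3_x1 a s); auto.
    intros y hy. apply hs. repeat split; lra. }
  assert (E : forall t x1 x2, box rho t x1 x2 ->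
    dx1 g t x1 x2 = Series (homog3 (coef_dx1 a) t x1 x2)).
  { intros t x1 x2 hb. apply is_derive_unique, dx1_series, hb. }
  split.
  - exists (coef_dx1 a); split; [apply coef_conv_dx1, hc|].
    intros t x1 x2 hb. rewrite E by exact hb. apply Series_correct, dx1_series, hb.
  - intros t x1 x2 hb. rewrite E by exact hb. apply dx1_series, hb.
Qed.

(* [dx2 g] is convertible to the swap of [dx1] of the swapped function. *)
Lemma analytic_on_dx2 rho g : analytic_on rho g ->
  analytic_on rho (dx2 g) /\
  forall t x1 x2, box rho t x1 x2 -> is_derive (fun y => g t x1 y) x2 (dx2 g t x1 x2).
Proof.
  intros hg. destruct (analytic_on_dx1 _ _ (analytic_on_swap _ _ hg)) as [ha hd].
  split.
  - apply (analytic_on_swap _ _ ha).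
  - intros t x1 x2 (h0 & h1 & h2). apply (hd t x2 x1). repeat split; auto.
Qed.

Definition continuous3 (g : fn3) (t x1 x2 : R) : Prop :=
  forall eps, 0 < eps -> exists delta, 0 < delta /\
    forall t' y1 y2, Rabs (t' - t) < delta -> Rabs (y1 - x1) < delta ->
      Rabs (y2 - x2) < delta -> Rabs (g t' y1 y2 - g t x1 x2) < eps.

Lemma continuous3_of_continuous (g : fn3) t x1 x2 :
  continuous (fun p : R * R * R => g (fst (fst p)) (snd (fst p)) (snd p)) (t, x1, x2) ->
  continuous3 g t x1 x2.
Proof.
  intros H eps heps.
  destruct (proj1 (filterlim_locally _ _) H (mkposreal eps heps)) as [d Hd].
  exists d; split; [apply cond_pos|]. intros t' y1 y2 h0 h1 h2.
  apply (Hd (t', y1, y2)). repeat split; assumption.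
Qed.

Lemma continuous_sum_f_R0 {U : UniformSpace} (F : nat -> U -> R) x n :
  (forall m, continuous (F m) x) -> continuous (fun y => sum_f_R0 (fun m => F m y) n) x.
Proof.
  intros H; induction n as [|n IH]; [apply H|].
  apply (continuous_plus (fun y => sum_f_R0 (fun m => F m y) n) (F (S n))); auto.
Qed.

Lemma continuous_pow_comp {U : UniformSpace} (f : U -> R) x n :
  continuous f x -> continuous (fun y => f y ^ n) x.
Proof.
  intros H. apply (continuous_comp (V := R_UniformSpace) (W := R_UniformSpace) f (fun z => z ^ n));
    [exact H|].
  apply (ex_derive_continuous (K := R_AbsRing) (V := R_NormedModule)). auto_derive. auto.
Qed.

Lemma continuous_homog3 a n t x1 x2 :
  continuous (fun p : R * R * R => homog3 a (fst (fst p)) (snd (fst p)) (snd p) n) (t, x1, x2).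
Proof.
  unfold homog3. apply continuous_sum_f_R0; intro i. apply continuous_sum_f_R0; intro j.
  assert (Ht : continuous (fun p : R * R * R => fst (fst p)) (t, x1, x2))
    by (apply (continuous_comp fst fst); [apply continuous_fst|apply continuous_fst]).
  assert (H1 : continuous (fun p : R * R * R => snd (fst p)) (t, x1, x2))
    by (apply (continuous_comp fst snd); [apply continuous_fst|apply continuous_snd]).
  assert (H2 : continuous (fun p : R * R * R => snd p) (t, x1, x2)) by apply continuous_snd.
  repeat apply (continuous_mult (K := R_AbsRing)); try apply continuous_const;
    apply continuous_pow_comp; assumption.
Qed.

Lemma analytic_on_continuous3 rho g t x1 x2 :
  analytic_on rho g -> box rho t x1 x2 -> continuous3 g t x1 x2.
Proof.
  intros (a & hc & hs) hb eps heps.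
  destruct (box_margin _ _ _ _ hb) as (s & hsr & ht & h1 & h2).
  set (s2 := (s + rho) / 2).
  destruct (Series_minus_partial_small _ (hc s2 ltac:(unfold s2; lra)) (eps / 3))
    as [N HN]; [lra|].
  set (P := fun t x1 x2 => sum_f_R0 (homog3 a t x1 x2) N).
  assert (tail : forall t' y1 y2, Rabs t' < s2 -> Rabs y1 < s2 -> Rabs y2 < s2 ->
    Rabs (g t' y1 y2 - P t' y1 y2) < eps / 3).
  { intros t' y1 y2 h0' h1' h2'.
    rewrite <- (is_series_unique _ _ (hs t' y1 y2 ltac:(repeat split; unfold s2 in *; lra))).
    eapply Rle_lt_trans; [apply Series_minus_partial_le|apply HN; lia].
    - intros n; apply homog3_abs_le; lra.
    - apply hc; unfold s2; lra. }
  destruct (continuous3_of_continuous P t x1 x2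
    (continuous_sum_f_R0 _ _ N (fun n => continuous_homog3 a n t x1 x2)) (eps / 3))
    as (d & hd & Hd); [lra|].
  exists (Rmin d ((rho - s) / 2)); split; [apply Rmin_pos; lra|].
  intros t' y1 y2 e0 e1 e2.
  pose proof (Rmin_l d ((rho - s) / 2)); pose proof (Rmin_r d ((rho - s) / 2)).
  pose proof (Rabs_triang_inv t' t); pose proof (Rabs_triang_inv y1 x1);
    pose proof (Rabs_triang_inv y2 x2).
  specialize (Hd t' y1 y2 ltac:(lra) ltac:(lra) ltac:(lra)).
  pose proof (tail t' y1 y2 ltac:(unfold s2; lra) ltac:(unfold s2; lra) ltac:(unfold s2; lra)).
  pose proof (tail t x1 x2 ltac:(unfold s2; lra) ltac:(unfold s2; lra) ltac:(unfold s2; lra)).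
  replace (g t' y1 y2 - g t x1 x2) with ((g t' y1 y2 - P t' y1 y2)
    + (P t' y1 y2 - P t x1 x2) - (g t x1 x2 - P t x1 x2)) by ring.
  eapply Rle_lt_trans; [apply Rabs_triang|]. rewrite Rabs_Ropp.
  pose proof (Rabs_triang (g t' y1 y2 - P t' y1 y2) (P t' y1 y2 - P t x1 x2)). lra.
Qed.

(** * Smoothness of the slices *)

Lemma pd1_plus_scal f g c x y :
  ex_derive (fun z => f z y) x -> ex_derive (fun z => g z y) x ->
  pd1 (fun u v => f u v + c * g u v) x y = pd1 f x y + c * pd1 g x y.
Proof.
  intros hf hg. unfold pd1.
  rewrite (Derive_plus (fun z => f z y) (fun z => c * g z y)) by (auto; apply ex_derive_scal, hg).
  now rewrite Derive_scal.
Qed.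

Lemma pd2_plus_scal f g c x y :
  ex_derive (fun z => f x z) y -> ex_derive (fun z => g x z) y ->
  pd2 (fun u v => f u v + c * g u v) x y = pd2 f x y + c * pd2 g x y.
Proof. apply (pd1_plus_scal (fun u v => f v u) (fun u v => g v u)). Qed.

Lemma locally_ex_diff_n_S f n x y : locally_2d (ex_diff_n f (S n)) x y ->
  locally_2d (ex_diff_n f n) x y /\ locally_2d (ex_diff_n (pd1 f) n) x y /\
  locally_2d (ex_diff_n (pd2 f) n) x y.
Proof.
  intros H; repeat split; apply locally_2d_impl with (2 := H), locally_2d_forall; intros u v.
  - apply ex_diff_n_m; auto.
  - apply ex_diff_n_deriv_aux1.
  - apply ex_diff_n_deriv_aux2.
Qed.

(* The form [f + c * g] serves both the product rule ([c = 1]) and [jac2] ([c = -1]). *)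
Lemma ex_diff_n_plus_scal n c : forall f g x y,
  locally_2d (ex_diff_n f n) x y -> locally_2d (ex_diff_n g n) x y ->
  locally_2d (ex_diff_n (fun u v => f u v + c * g u v) n) x y.
Proof.
  induction n as [|n IH]; intros f g x y Hf Hg;
    apply locally_2d_impl_strong with (2 := locally_2d_and _ _ _ _ Hf Hg);
    apply locally_2d_forall; intros u v Hfg;
    destruct (locally_2d_singleton _ _ _ Hfg) as [hf hg].
  - split; [|exact I].
    apply continuity_2d_pt_plus; [apply hf|].
    apply continuity_2d_pt_mult; [apply continuity_2d_pt_const|apply hg].
  - destruct (locally_ex_diff_n_S f n u v) as (_ & Hf1 & Hf2);
      [apply locally_2d_impl with (2 := Hfg), locally_2d_forall; tauto|].
    destruct (locally_ex_diff_n_S g n u v) as (_ & Hg1 & Hg2);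
      [apply locally_2d_impl with (2 := Hfg), locally_2d_forall; tauto|].
    destruct hf as (cf & df1 & df2 & _); destruct hg as (cg & dg1 & dg2 & _).
    split; [|split; [|split; [|split]]].
    + apply continuity_2d_pt_plus; [exact cf|].
      apply continuity_2d_pt_mult; [apply continuity_2d_pt_const|exact cg].
    + apply (ex_derive_plus (fun z => f z v) (fun z => c * g z v)); [|apply ex_derive_scal]; auto.
    + apply (ex_derive_plus (fun z => f u z) (fun z => c * g u z)); [|apply ex_derive_scal]; auto.
    + apply ex_diff_n_ext_loc with (fun u v => pd1 f u v + c * pd1 g u v).
      * apply locally_2d_impl with (2 := Hfg), locally_2d_forall.
        intros u' v' [[_ [h1 _]] [_ [h2 _]]]. symmetry. apply pd1_plus_scal; auto.
      * apply locally_2d_singleton, IH; assumption.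
    + apply ex_diff_n_ext_loc with (fun u v => pd2 f u v + c * pd2 g u v).
      * apply locally_2d_impl with (2 := Hfg), locally_2d_forall.
        intros u' v' [[_ [_ [h1 _]]] [_ [_ [h2 _]]]]. symmetry. apply pd2_plus_scal; auto.
      * apply locally_2d_singleton, IH; assumption.
Qed.

Lemma ex_diff_n_mult n : forall f g x y,
  locally_2d (ex_diff_n f n) x y -> locally_2d (ex_diff_n g n) x y ->
  locally_2d (ex_diff_n (fun u v => f u v * g u v) n) x y.
Proof.
  induction n as [|n IH]; intros f g x y Hf Hg;
    apply locally_2d_impl_strong with (2 := locally_2d_and _ _ _ _ Hf Hg);
    apply locally_2d_forall; intros u v Hfg;
    destruct (locally_2d_singleton _ _ _ Hfg) as [hf hg].
  - split; [|exact I]. apply continuity_2d_pt_mult; [apply hf|apply hg].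
  - destruct (locally_ex_diff_n_S f n u v) as (Hf0 & Hf1 & Hf2);
      [apply locally_2d_impl with (2 := Hfg), locally_2d_forall; tauto|].
    destruct (locally_ex_diff_n_S g n u v) as (Hg0 & Hg1 & Hg2);
      [apply locally_2d_impl with (2 := Hfg), locally_2d_forall; tauto|].
    destruct hf as (cf & df1 & df2 & _); destruct hg as (cg & dg1 & dg2 & _).
    split; [|split; [|split; [|split]]].
    + apply continuity_2d_pt_mult; assumption.
    + apply (ex_derive_mult (fun z => f z v) (fun z => g z v)); assumption.
    + apply (ex_derive_mult (fun z => f u z) (fun z => g u z)); assumption.
    + apply ex_diff_n_ext_loc with (fun u v => pd1 f u v * g u v + 1 * (f u v * pd1 g u v)).
      * apply locally_2d_impl with (2 := Hfg), locally_2d_forall.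
        intros u' v' [[_ [h1 _]] [_ [h2 _]]]. unfold pd1.
        rewrite Derive_mult, Rmult_1_l by assumption; reflexivity.
      * apply locally_2d_singleton, ex_diff_n_plus_scal; apply IH; assumption.
    + apply ex_diff_n_ext_loc with (fun u v => pd2 f u v * g u v + 1 * (f u v * pd2 g u v)).
      * apply locally_2d_impl with (2 := Hfg), locally_2d_forall.
        intros u' v' [[_ [_ [h1 _]]] [_ [_ [h2 _]]]]. unfold pd2.
        rewrite Derive_mult, Rmult_1_l by assumption; reflexivity.
      * apply locally_2d_singleton, ex_diff_n_plus_scal; apply IH; assumption.
Qed.

Lemma ex_diff_n_jac2 n f g x y :
  locally_2d (ex_diff_n f (S n)) x y -> locally_2d (ex_diff_n g (S n)) x y ->
  locally_2d (ex_diff_n (jac2 f g) n) x y.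
Proof.
  intros Hf Hg.
  destruct (locally_ex_diff_n_S f n x y Hf) as (_ & Hf1 & Hf2).
  destruct (locally_ex_diff_n_S g n x y Hg) as (_ & Hg1 & Hg2).
  apply locally_2d_impl with
    (2 := ex_diff_n_plus_scal n (-1) _ _ x y (ex_diff_n_mult n _ _ x y Hf1 Hg2)
            (ex_diff_n_mult n _ _ x y Hf2 Hg1)).
  apply locally_2d_forall; intros u v.
  apply ex_diff_n_ext_loc, locally_2d_forall; intros u' v'. unfold jac2. ring.
Qed.

Lemma continuity_2d_pt_of_continuous3 g t x1 x2 :
  continuous3 g t x1 x2 -> continuity_2d_pt (g t) x1 x2.
Proof.
  intros H eps. destruct (H eps (cond_pos eps)) as (d & hd & Hd).
  exists (mkposreal d hd); intros u v hu hv. apply Hd; auto.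
  rewrite Rminus_diag, Rabs_R0; exact hd.
Qed.

Lemma locally_2d_box rho t x1 x2 : box rho t x1 x2 -> locally_2d (box rho t) x1 x2.
Proof.
  intros hb. destruct (box_margin _ _ _ _ hb) as (s & hsr & ht & h1 & h2).
  exists (mkposreal (rho - s) ltac:(lra)); simpl; intros u v hu hv.
  pose proof (Rabs_triang_inv u x1); pose proof (Rabs_triang_inv v x2).
  repeat split; lra.
Qed.

Lemma analytic_on_ex_diff_n rho t x1 x2 n : forall g,
  analytic_on rho g -> box rho t x1 x2 -> ex_diff_n (g t) n x1 x2.
Proof.
  induction n as [|n IH]; intros g hg hb.
  - split; [|exact I]. apply continuity_2d_pt_of_continuous3, (analytic_on_continuous3 rho); auto.
  - destruct (analytic_on_dx1 _ _ hg) as [h1 d1]; destruct (analytic_on_dx2 _ _ hg) as [h2 d2].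
    repeat split.
    + apply continuity_2d_pt_of_continuous3, (analytic_on_continuous3 rho); auto.
    + eexists; apply d1, hb.
    + eexists; apply d2, hb.
    + apply (IH (dx1 g) h1 hb).
    + apply (IH (dx2 g) h2 hb).
Qed.

Lemma analytic_on_locally_ex_diff_n rho g t x1 x2 n :
  analytic_on rho g -> box rho t x1 x2 -> locally_2d (ex_diff_n (g t) n) x1 x2.
Proof.
  intros hg hb. apply locally_2d_impl with (2 := locally_2d_box _ _ _ _ hb).
  apply locally_2d_forall; intros u v; apply analytic_on_ex_diff_n, hg.
Qed.

Lemma differentiable_pt_lim_of_ex_diff_n f x y :
  locally_2d (ex_diff_n f 1) x y -> differentiable_pt_lim f x y (pd1 f x y) (pd2 f x y).
Proof.
  intros H eps.
  destruct (locally_2d_singleton _ _ _ H) as (_ & _ & _ & [c1 _] & [c2 _]).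
  assert (he : 0 < eps / 2) by (pose proof (cond_pos eps); lra).
  destruct (locally_2d_and _ _ _ _ H
    (locally_2d_and _ _ _ _ (c1 (mkposreal _ he)) (c2 (mkposreal _ he)))) as [d Hd].
  exists d; intros u v hu hv.
  destruct (MVT_cor4 (fun z => f z v) (fun z => pd1 f z v) x (Rabs (u - x))) with (b := u)
    as (c & Ec & hc); [|lra|].
  { intros c hc. apply Derive_correct. apply (Hd c v); lra. }
  destruct (MVT_cor4 (fun z => f x z) (pd2 f x) y (Rabs (v - y))) with (b := v)
    as (c' & Ec' & hc'); [|lra|].
  { intros c' hc'. apply Derive_correct.
    apply (Hd x c'); [rewrite Rminus_diag, Rabs_R0; apply cond_pos|lra]. }
  destruct (Hd c v ltac:(lra) hv) as (_ & A1 & _).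
  destruct (Hd x c' ltac:(rewrite Rminus_diag, Rabs_R0; apply cond_pos) ltac:(lra))
    as (_ & _ & A2).
  simpl in A1, A2.
  replace (f u v - f x y - (pd1 f x y * (u - x) + pd2 f x y * (v - y))) with
    ((pd1 f c v - pd1 f x y) * (u - x) + (pd2 f x c' - pd2 f x y) * (v - y)) by lra.
  pose proof (Rmax_l (Rabs (u - x)) (Rabs (v - y))).
  pose proof (Rmax_r (Rabs (u - x)) (Rabs (v - y))).
  eapply Rle_trans; [apply Rabs_triang|]. rewrite !Rabs_mult.
  pose proof (cond_pos eps).
  apply Rle_trans with (eps / 2 * Rabs (u - x) + eps / 2 * Rabs (v - y)); [|nra].
  unfold pd1, pd2.
  apply Rplus_le_compat; apply Rmult_le_compat_r; try apply Rabs_pos; lra.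
Qed.

Lemma linear_system_small_zero A1 A2 B1 B2 h1 h2 e :
  Rabs (A1 * h1 + A2 * h2) <= e * Rmax (Rabs h1) (Rabs h2) ->
  Rabs (B1 * h1 + B2 * h2) <= e * Rmax (Rabs h1) (Rabs h2) ->
  e * (Rabs A1 + Rabs A2 + Rabs B1 + Rabs B2) < Rabs (A1 * B2 - A2 * B1) ->
  h1 = 0 /\ h2 = 0.
Proof.
  set (u := A1 * h1 + A2 * h2); set (w := B1 * h1 + B2 * h2);
    set (m := Rmax (Rabs h1) (Rabs h2)); set (D := A1 * B2 - A2 * B1).
  intros hu hw hD.
  assert (E1 : D * h1 = B2 * u - A2 * w) by (unfold D, u, w; ring).
  assert (E2 : D * h2 = A1 * w - B1 * u) by (unfold D, u, w; ring).
  assert (R1 : Rabs D * Rabs h1 <= (Rabs A2 + Rabs B2) * (e * m)).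
  { rewrite <- Rabs_mult, E1. unfold Rminus. eapply Rle_trans; [apply Rabs_triang|].
    rewrite Rabs_Ropp, !Rabs_mult. pose proof (Rabs_pos A2); pose proof (Rabs_pos B2).
    pose proof (Rabs_pos u); pose proof (Rabs_pos w). nra. }
  assert (R2 : Rabs D * Rabs h2 <= (Rabs A1 + Rabs B1) * (e * m)).
  { rewrite <- Rabs_mult, E2. unfold Rminus. eapply Rle_trans; [apply Rabs_triang|].
    rewrite Rabs_Ropp, !Rabs_mult. pose proof (Rabs_pos A1); pose proof (Rabs_pos B1).
    pose proof (Rabs_pos u); pose proof (Rabs_pos w). nra. }
  assert (Rabs D * m <= (Rabs A1 + Rabs A2 + Rabs B1 + Rabs B2) * (e * m)).
  { unfold m at 1. apply Rmax_case_strong; intros _;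
      pose proof (Rabs_pos A1); pose proof (Rabs_pos A2); pose proof (Rabs_pos B1);
      pose proof (Rabs_pos B2); pose proof (Rabs_pos u); pose proof (Rabs_pos w); nra. }
  assert (hm : m <= 0).
  { pose proof (Rabs_pos u). pose proof (Rle_trans _ _ _ (Rabs_pos u) hu).
    apply Rnot_lt_le; intros hm. nra. }
  assert (Rabs h1 <= m /\ Rabs h2 <= m) as [] by (split; [apply Rmax_l|apply Rmax_r]).
  pose proof (Rabs_pos h1); pose proof (Rabs_pos h2).
  split; apply Rabs_eq_0; lra.
Qed.

Lemma differentiable_common_zero_isolated h1 h2 x y A1 A2 B1 B2 :
  differentiable_pt_lim h1 x y A1 A2 -> differentiable_pt_lim h2 x y B1 B2 ->
  h1 x y = 0 -> h2 x y = 0 -> A1 * B2 - A2 * B1 <> 0 ->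
  locally_2d (fun u v => h1 u v = 0 -> h2 u v = 0 -> u = x /\ v = y) x y.
Proof.
  intros d1 d2 z1 z2 hD.
  set (M := Rabs A1 + Rabs A2 + Rabs B1 + Rabs B2).
  assert (hM : 0 <= M) by (unfold M; pose proof (Rabs_pos A1); pose proof (Rabs_pos A2);
    pose proof (Rabs_pos B1); pose proof (Rabs_pos B2); lra).
  assert (hD' : 0 < Rabs (A1 * B2 - A2 * B1)) by (apply Rabs_pos_lt, hD).
  set (e := mkposreal (Rabs (A1 * B2 - A2 * B1) / (2 * (M + 1)))
              ltac:(apply Rdiv_lt_0_compat; lra)).
  apply locally_2d_impl with (2 := locally_2d_and _ _ _ _ (d1 e) (d2 e)).
  apply locally_2d_forall; intros u v [k1 k2] hu hv.
  rewrite hu, z1 in k1; rewrite hv, z2 in k2.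
  replace (0 - 0 - _) with (- (A1 * (u - x) + A2 * (v - y))) in k1 by ring.
  replace (0 - 0 - _) with (- (B1 * (u - x) + B2 * (v - y))) in k2 by ring.
  rewrite Rabs_Ropp in k1, k2.
  destruct (linear_system_small_zero _ _ _ _ _ _ _ k1 k2); [|split; lra].
  simpl. fold M. apply Rmult_lt_reg_r with (2 * (M + 1)); [lra|].
  replace (_ / (2 * (M + 1)) * M * (2 * (M + 1))) with (Rabs (A1 * B2 - A2 * B1) * M)
    by (field; lra).
  nra.
Qed.

(** * Compactness of squares *)

Lemma nested_intervals (a s : nat -> R) :
  (forall n, s (S n) = s n / 2) -> (forall n, Rabs (a (S n) - a n) <= s (S n)) ->
  exists p, forall n, Rabs (a n - p) <= s n.
Proof.
  intros hs ha.
  assert (Hs : forall n, 0 <= s n).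
  { intros n. pose proof (Rle_trans _ _ _ (Rabs_pos _) (ha n)).
    rewrite hs in H. lra. }
  assert (step : forall n, a n - s n <= a (S n) - s (S n) /\ a (S n) + s (S n) <= a n + s n).
  { intros n. specialize (ha n). rewrite hs in *. apply Rabs_le_between in ha. lra. }
  assert (mono : forall n k, a n - s n <= a (k + n)%nat - s (k + n)%nat /\
                             a (k + n)%nat + s (k + n)%nat <= a n + s n).
  { intros n k; induction k as [|k IH]; simpl; [lra|]. specialize (step (k + n)%nat). lra. }
  assert (LU : forall n m, a n - s n <= a m + s m).
  { intros n m. destruct (mono n (m - n)%nat) as [h1 _]; destruct (mono m (n - m)%nat) as [_ h2].
    pose proof (Hs n); pose proof (Hs m).
    destruct (Compare_dec.le_lt_dec n m) as [h|h].
    - replace (m - n + n)%nat with m in h1 by lia. lra.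
    - replace (n - m + m)%nat with n in h2 by lia. lra. }
  destruct (completeness (fun x => exists n, x = a n - s n)) as [p [Hub Hlub]].
  { exists (a 0%nat + s 0%nat). intros x [n ->]. apply LU. }
  { exists (a 0%nat - s 0%nat), 0%nat. reflexivity. }
  exists p. intros n. apply Rabs_le.
  assert (a n - s n <= p) by (apply Hub; exists n; reflexivity).
  assert (p <= a n + s n) by (apply Hlub; intros x [m ->]; apply LU).
  lra.
Qed.

Definition in_square (a b s x y : R) : Prop := Rabs (x - a) <= s /\ Rabs (y - b) <= s.

Lemma Rabs_le_halves x a s : Rabs (x - a) <= s ->
  Rabs (x - (a - s / 2)) <= s / 2 \/ Rabs (x - (a + s / 2)) <= s / 2.
Proof.
  intros h; apply Rabs_le_between in h.
  destruct (Rle_dec x a); [left|right]; apply Rabs_le; lra.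
Qed.

Section SquareAccumulation.

(* Typical [P]: "is infinite", or "meets every member of a decreasing family". *)
Variable P : (R -> R -> Prop) -> Prop.
Hypothesis P_mono : forall A B : R -> R -> Prop, (forall x y, A x y -> B x y) -> P A -> P B.
Hypothesis P_union : forall A B : R -> R -> Prop, P (fun x y => A x y \/ B x y) -> P A \/ P B.

Lemma large_quarter a b s : 0 <= s -> P (in_square a b s) ->
  exists a' b', P (in_square a' b' (s / 2)) /\ Rabs (a' - a) <= s / 2 /\ Rabs (b' - b) <= s / 2.
Proof.
  intros hs H.
  apply (P_mono _ (fun x y =>
    (in_square (a - s / 2) (b - s / 2) (s / 2) x y \/ in_square (a - s / 2) (b + s / 2) (s / 2) x y) \/
    (in_square (a + s / 2) (b - s / 2) (s / 2) x y \/ in_square (a + s / 2) (b + s / 2) (s / 2) x y)))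
    in H.
  - destruct (P_union _ _ H) as [H'|H']; destruct (P_union _ _ H') as [Q|Q];
      (eexists _, _; split; [exact Q|]); split; apply Rabs_le; lra.
  - intros x y [hx hy]. unfold in_square.
    destruct (Rabs_le_halves _ _ _ hx); destruct (Rabs_le_halves _ _ _ hy); tauto.
Qed.

Lemma large_nested_squares a b r : 0 <= r -> P (in_square a b r) ->
  exists c : nat -> R * R, forall n,
    P (in_square (fst (c n)) (snd (c n)) (r * (/ 2) ^ n)) /\
    Rabs (fst (c (S n)) - fst (c n)) <= r * (/ 2) ^ S n /\
    Rabs (snd (c (S n)) - snd (c n)) <= r * (/ 2) ^ S n.
Proof.
  intros hr H0.
  assert (hs : forall n, 0 <= r * (/ 2) ^ n)
    by (intros n; apply Rmult_le_pos; [lra|apply pow_le; lra]).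
  assert (step : forall n (c : R * R), exists c' : R * R,
    P (in_square (fst c) (snd c) (r * (/ 2) ^ n)) ->
    P (in_square (fst c') (snd c') (r * (/ 2) ^ S n)) /\
    Rabs (fst c' - fst c) <= r * (/ 2) ^ S n /\ Rabs (snd c' - snd c) <= r * (/ 2) ^ S n).
  { intros n c. destruct (classic (P (in_square (fst c) (snd c) (r * (/ 2) ^ n)))) as [Hc|Hc].
    - replace (r * (/ 2) ^ S n) with (r * (/ 2) ^ n / 2) by (simpl; field).
      destruct (large_quarter _ _ _ (hs n) Hc)
        as (a' & b' & Q).
      exists (a', b'). auto.
    - exists c. tauto. }
  set (next := fun n c => proj1_sig (constructive_indefinite_description _ (step n c))).
  assert (next_spec := fun n c => proj2_sig (constructive_indefinite_description _ (step n c))).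
  fold next in next_spec; simpl in next_spec.
  set (c := fix c n := match n with O => (a, b) | S n => next n (c n) end).
  assert (large : forall n, P (in_square (fst (c n)) (snd (c n)) (r * (/ 2) ^ n))).
  { induction n as [|n IH]; [simpl; rewrite Rmult_1_r; exact H0|].
    apply (next_spec n _ IH). }
  exists c; intros n. split; [apply large|apply (next_spec n _ (large n))].
Qed.

Lemma large_accumulation a b r : 0 < r -> P (in_square a b r) ->
  exists p1 p2, forall e, 0 < e -> P (fun x y => Rabs (x - p1) < e /\ Rabs (y - p2) < e).
Proof.
  intros hr H0.
  destruct (large_nested_squares a b r ltac:(lra) H0) as [c Hc].
  set (s := fun n => r * (/ 2) ^ n).
  assert (hsS : forall n, s (S n) = s n / 2) by (intros n; unfold s; simpl; field).
  destruct (nested_intervals (fun n => fst (c n)) s hsS (fun n => proj1 (proj2 (Hc n))))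
    as [p1 Hp1].
  destruct (nested_intervals (fun n => snd (c n)) s hsS (fun n => proj2 (proj2 (Hc n))))
    as [p2 Hp2].
  exists p1, p2; intros e he.
  destruct (pow_lt_1_zero (/ 2) ltac:(rewrite Rabs_pos_eq; lra) (e / (2 * r)))
    as [N HN]; [apply Rdiv_lt_0_compat; lra|].
  specialize (HN N (le_n N)). rewrite Rabs_pos_eq in HN by (apply pow_le; lra).
  assert (2 * s N < e).
  { unfold s. apply Rmult_lt_compat_l with (r := 2 * r) in HN; [|lra].
    replace (2 * r * (e / (2 * r))) with e in HN by (field; lra). lra. }
  apply (P_mono _ _) with (2 := proj1 (Hc N)). intros x y [hx hy].
  specialize (Hp1 N); specialize (Hp2 N); simpl in Hp1, Hp2.
  pose proof (Rabs_triang (x - fst (c N)) (fst (c N) - p1)).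
  pose proof (Rabs_triang (y - snd (c N)) (snd (c N) - p2)).
  replace (x - fst (c N) + (fst (c N) - p1)) with (x - p1) in * by ring.
  replace (y - snd (c N) + (snd (c N) - p2)) with (y - p2) in * by ring.
  unfold s in *. split; lra.
Qed.

End SquareAccumulation.

(** * Folds and cusps *)

Lemma inD_abs r x1 x2 : 0 <= r -> inD r x1 x2 -> Rabs x1 <= r /\ Rabs x2 <= r.
Proof.
  unfold inD; simpl; intros hr H.
  split; apply Rabs_le; split; nra.
Qed.

Lemma inD_le r r' x1 x2 : 0 <= r <= r' -> inD r x1 x2 -> inD r' x1 x2.
Proof. unfold inD; simpl; nra. Qed.

Definition adherent (S : R -> R -> Prop) (p1 p2 : R) : Prop :=
  forall e, 0 < e -> exists x1 x2, S x1 x2 /\ Rabs (x1 - p1) < e /\ Rabs (x2 - p2) < e.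

Lemma sqr_sub_sqr_le x p e : Rabs (x - p) < e -> e <= 1 -> p * p - x * x <= e * (2 * Rabs p + 1).
Proof.
  intros h he.
  replace (p * p - x * x) with ((p - x) * (p + x)) by ring.
  eapply Rle_trans; [apply Rle_abs|]. rewrite Rabs_mult, Rabs_minus_sym.
  apply Rmult_le_compat; try apply Rabs_pos; [lra|].
  replace (p + x) with (2 * p + (x - p)) by ring.
  eapply Rle_trans; [apply Rabs_triang|]. rewrite Rabs_mult, (Rabs_pos_eq 2) by lra. lra.
Qed.

Lemma adherent_inD r S p1 p2 :
  (forall x1 x2, S x1 x2 -> inD r x1 x2) -> adherent S p1 p2 -> inD r p1 p2.
Proof.
  intros HS Hp. apply Rnot_lt_le; intros hlt. unfold inD in *; simpl in *.
  set (gap := p1 * (p1 * 1) + p2 * (p2 * 1) - r * (r * 1)).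
  set (K := 2 * Rabs p1 + 1 + (2 * Rabs p2 + 1)).
  assert (hK : 0 < K) by (unfold K; pose proof (Rabs_pos p1); pose proof (Rabs_pos p2); lra).
  set (e := Rmin 1 (gap / (2 * K))).
  assert (he : 0 < e) by (apply Rmin_pos; [lra|apply Rdiv_lt_0_compat; unfold gap; lra]).
  assert (heK : e * K <= gap / 2).
  { apply Rle_trans with (gap / (2 * K) * K); [apply Rmult_le_compat_r; [lra|apply Rmin_r]|].
    right; field; lra. }
  destruct (Hp e he) as (x1 & x2 & hx & h1 & h2).
  specialize (HS x1 x2 hx); simpl in HS.
  pose proof (sqr_sub_sqr_le x1 p1 e h1 (Rmin_l _ _)).
  pose proof (sqr_sub_sqr_le x2 p2 e h2 (Rmin_l _ _)).
  unfold K, gap in *. lra.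
Qed.

Lemma continuity_2d_pt_adherent_zero h S p1 p2 :
  continuity_2d_pt h p1 p2 -> (forall x1 x2, S x1 x2 -> h x1 x2 = 0) ->
  adherent S p1 p2 -> h p1 p2 = 0.
Proof.
  intros hc hS hp. apply Rabs_eq_0, Rle_antisym; [|apply Rabs_pos].
  apply Rnot_lt_le; intros hpos.
  destruct (hc (mkposreal _ hpos)) as [d Hd].
  destruct (hp d (cond_pos d)) as (x1 & x2 & hx & h1 & h2).
  specialize (Hd x1 x2 h1 h2); simpl in Hd.
  rewrite hS, Rminus_0_l, Rabs_Ropp in Hd by exact hx. lra.
Qed.

Lemma finite_of_isolated (S : R -> R -> Prop) r : 0 < r ->
  (forall x1 x2, S x1 x2 -> inD r x1 x2) ->
  (forall p1 p2, inD r p1 p2 -> adherent S p1 p2 ->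
     locally_2d (fun x1 x2 => S x1 x2 -> x1 = p1 /\ x2 = p2) p1 p2) ->
  exists l, forall x1 x2, S x1 x2 -> In (x1, x2) l.
Proof.
  intros hr HS Hiso. apply NNPP; intros Hinf.
  set (P := fun A : R -> R -> Prop =>
    ~ exists l, forall x1 x2, S x1 x2 -> A x1 x2 -> In (x1, x2) l).
  destruct (large_accumulation P) with (a := 0) (b := 0) (r := r) as (p1 & p2 & Hp).
  - intros A B AB HA [l Hl]. apply HA. exists l; auto.
  - intros A B HAB. apply NNPP; intros HAB'. apply HAB.
    apply not_or_and in HAB' as [HA HB]. apply NNPP in HA as [lA HA], HB as [lB HB].
    exists (lA ++ lB); intros x1 x2 hx [h|h]; apply in_or_app; auto.
  - exact hr.
  - intros [l Hl]. apply Hinf. exists l; intros x1 x2 hx. apply Hl; [exact hx|].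
    unfold in_square; rewrite !Rminus_0_r. apply inD_abs, HS; [lra|exact hx].
  - assert (adh : adherent S p1 p2).
    { intros e he. apply NNPP; intros Hn. apply (Hp e he). exists nil.
      intros x1 x2 hx [h1 h2]. apply Hn. exists x1, x2. auto. }
    destruct (Hiso p1 p2 (adherent_inD r S p1 p2 HS adh) adh) as [d Hd].
    apply (Hp d (cond_pos d)). exists ((p1, p2) :: nil).
    intros x1 x2 hx [h1 h2]. destruct (Hd x1 x2 h1 h2 hx) as [-> ->]. now left.
Qed.

Lemma continuous3_small_zero g p1 p2 : continuous3 g 0 p1 p2 ->
  (forall d, 0 < d -> exists t x1 x2, Rabs t < d /\ Rabs (x1 - p1) < d /\
     Rabs (x2 - p2) < d /\ Rabs (g t x1 x2) <= d) ->
  g 0 p1 p2 = 0.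
Proof.
  intros hc H. apply Rabs_eq_0, Rle_antisym; [|apply Rabs_pos].
  apply Rnot_lt_le; intros hpos.
  destruct (hc (/ 2 * Rabs (g 0 p1 p2))) as (d & hd & Hd); [lra|].
  set (d' := Rmin d (/ 4 * Rabs (g 0 p1 p2))).
  assert (d' <= d /\ d' <= / 4 * Rabs (g 0 p1 p2)) as [] by (split; [apply Rmin_l|apply Rmin_r]).
  destruct (H d') as (t & x1 & x2 & ht & h1 & h2 & hg); [apply Rmin_pos; lra|].
  specialize (Hd t x1 x2 ltac:(rewrite Rminus_0_r; lra) ltac:(lra) ltac:(lra)).
  pose proof (Rabs_triang_inv (g 0 p1 p2) (g t x1 x2)).
  rewrite Rabs_minus_sym in Hd. lra.
Qed.

Lemma meets_decreasing_family_or (Q : R -> R -> R -> Prop) (A B : R -> R -> Prop) :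
  (forall d d' x1 x2, 0 < d <= d' -> Q d x1 x2 -> Q d' x1 x2) ->
  (forall d, 0 < d -> exists x1 x2, Q d x1 x2 /\ (A x1 x2 \/ B x1 x2)) ->
  (forall d, 0 < d -> exists x1 x2, Q d x1 x2 /\ A x1 x2) \/
  (forall d, 0 < d -> exists x1 x2, Q d x1 x2 /\ B x1 x2).
Proof.
  intros Qle HAB. apply NNPP; intros Hn. apply not_or_and in Hn as [HA HB].
  apply not_all_ex_not in HA as [dA HA], HB as [dB HB].
  apply imply_to_and in HA as [hdA HA], HB as [hdB HB].
  pose proof (Rmin_l dA dB); pose proof (Rmin_r dA dB).
  destruct (HAB (Rmin dA dB) (Rmin_pos _ _ hdA hdB)) as (x1 & x2 & hQ & [hA|hB]).
  - apply HA. exists x1, x2. split; [|exact hA]. apply Qle with (2 := hQ).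
    split; [apply Rmin_pos|]; auto.
  - apply HB. exists x1, x2. split; [|exact hB]. apply Qle with (2 := hQ).
    split; [apply Rmin_pos|]; auto.
Qed.

Lemma preimage_concentrates (f1 f2 : fn3) r0 e : 0 < r0 -> 0 < e ->
  (forall p1 p2, inD r0 p1 p2 -> continuous3 f1 0 p1 p2 /\ continuous3 f2 0 p1 p2) ->
  (forall x1 x2, inD r0 x1 x2 -> f1 0 x1 x2 = 0 -> f2 0 x1 x2 = 0 -> x1 = 0 /\ x2 = 0) ->
  exists d, 0 < d /\ forall t x1 x2, Rabs t < d -> inD r0 x1 x2 ->
    inD d (f1 t x1 x2) (f2 t x1 x2) -> Rabs x1 < e /\ Rabs x2 < e.
Proof.
  intros hr0 he Hcont Hzero. apply NNPP; intros Hno.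
  set (bad := fun d x1 x2 => exists t, Rabs t < d /\ inD r0 x1 x2 /\
    inD d (f1 t x1 x2) (f2 t x1 x2) /\ ~ (Rabs x1 < e /\ Rabs x2 < e)).
  destruct (large_accumulation (fun A =>
    forall d, 0 < d -> exists x1 x2, bad d x1 x2 /\ A x1 x2)) with (a := 0) (b := 0) (r := r0)
    as (p1 & p2 & Hp).
  - intros A B AB HA d hd. destruct (HA d hd) as (x1 & x2 & hb & hA). eauto.
  - intros A B; apply meets_decreasing_family_or.
    intros d d' x1 x2 hd (t & h1 & h2 & h3 & h4).
    exists t; repeat split; auto; [lra|apply inD_le with d; [lra|exact h3]].
  - exact hr0.
  - intros d hd. apply NNPP; intros Hn. apply Hno. exists d; split; [exact hd|].
    intros t x1 x2 ht hx hf. apply NNPP; intros Hc. apply Hn. exists x1, x2.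
    split; [exists t; repeat split; auto|]. unfold in_square; rewrite !Rminus_0_r.
    apply inD_abs; [lra|exact hx].
  - assert (hp : inD r0 p1 p2).
    { apply (adherent_inD r0 (inD r0)); [auto|]. intros eta heta.
      destruct (Hp eta heta 1 Rlt_0_1) as (x1 & x2 & (t & _ & hx & _) & h1 & h2). eauto. }
    assert (vanish : forall g, (g = f1 \/ g = f2) -> g 0 p1 p2 = 0).
    { intros g hg. apply continuous3_small_zero;
        [destruct hg; subst; apply (Hcont p1 p2 hp)|].
      intros d hd. destruct (Hp d hd d hd) as (x1 & x2 & (t & ht & _ & hf & _) & h1 & h2).
      exists t, x1, x2. destruct (inD_abs d _ _ ltac:(lra) hf).
      repeat split; auto. destruct hg; subst; assumption. }
    destruct (Hzero p1 p2 hp (vanish f1 (or_introl eq_refl)) (vanish f2 (or_intror eq_refl)))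
      as [-> ->].
    destruct (Hp e he 1 Rlt_0_1) as (x1 & x2 & (t & _ & _ & _ & hout) & h1 & h2).
    rewrite !Rminus_0_r in h1, h2. tauto.
Qed.

Lemma jac2_crit_grad_zero h J x1 x2 :
  pd1 J x1 x2 = 0 -> pd2 J x1 x2 = 0 -> jac2 h J x1 x2 = 0.
Proof. intros h1 h2. unfold jac2. rewrite h1, h2. ring. Qed.

Lemma fold_pt_intro g1 g2 x1 x2 : critical_pt g1 g2 x1 x2 ->
  ~ (jac2 g1 (jac2 g1 g2) x1 x2 = 0 /\ jac2 g2 (jac2 g1 g2) x1 x2 = 0) ->
  fold_pt g1 g2 x1 x2.
Proof.
  intros hJ hF. split; [split; [exact hJ|]|exact hF].
  intros [h1 h2]. apply hF. split; apply jac2_crit_grad_zero; assumption.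
Qed.

Lemma cusp_pt_intro g1 g2 x1 x2 : let J := jac2 g1 g2 in
  J x1 x2 = 0 -> jac2 g1 J x1 x2 = 0 -> jac2 g2 J x1 x2 = 0 ->
  ~ (jac2 (jac2 g1 J) J x1 x2 = 0 /\ jac2 (jac2 g2 J) J x1 x2 = 0) ->
  cusp_pt g1 g2 x1 x2.
Proof.
  intros J hJ hF1 hF2 hK. split; [split; [exact hJ|]|auto].
  intros [h1 h2]. apply hK. split; apply jac2_crit_grad_zero; assumption.
Qed.

Lemma cusp_candidates_finite (g1 g2 : R -> R -> R) (S : R -> R -> Prop) r : 0 < r ->
  let J := jac2 g1 g2 in let F1 := jac2 g1 J in let F2 := jac2 g2 J in
  (forall x1 x2, inD r x1 x2 ->
     locally_2d (ex_diff_n g1 3) x1 x2 /\ locally_2d (ex_diff_n g2 3) x1 x2 /\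
     (J x1 x2 = 0 -> F1 x1 x2 = 0 -> F2 x1 x2 = 0 ->
      ~ (jac2 F1 J x1 x2 = 0 /\ jac2 F2 J x1 x2 = 0))) ->
  (forall x1 x2, S x1 x2 -> inD r x1 x2 /\ J x1 x2 = 0 /\ F1 x1 x2 = 0 /\ F2 x1 x2 = 0) ->
  exists l, forall x1 x2, S x1 x2 -> In (x1, x2) l.
Proof.
  intros hr J F1 F2 Hreg HS.
  apply (finite_of_isolated S r hr); [apply HS|]. intros p1 p2 hp adh.
  destruct (Hreg p1 p2 hp) as (C1 & C2 & Hnd).
  assert (CJ : locally_2d (ex_diff_n J 2) p1 p2) by (apply ex_diff_n_jac2; assumption).
  assert (CJ1 : locally_2d (ex_diff_n J 1) p1 p2)
    by (apply locally_2d_impl with (2 := CJ), locally_2d_forall; intros; apply ex_diff_n_m with 2%nat; auto).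
  assert (CF : forall g, locally_2d (ex_diff_n g 3) p1 p2 -> locally_2d (ex_diff_n (jac2 g J) 1) p1 p2).
  { intros g Cg. apply ex_diff_n_jac2; [|exact CJ].
    apply locally_2d_impl with (2 := Cg), locally_2d_forall; intros; apply ex_diff_n_m with 3%nat; auto. }
  assert (zero : forall h, locally_2d (ex_diff_n h 1) p1 p2 ->
    (forall x1 x2, S x1 x2 -> h x1 x2 = 0) -> h p1 p2 = 0).
  { intros h Ch hz. apply (continuity_2d_pt_adherent_zero h S); auto.
    apply (locally_2d_singleton _ _ _ Ch). }
  assert (hJ : J p1 p2 = 0) by (apply zero; [exact CJ1|apply HS]).
  assert (isolated : forall g, locally_2d (ex_diff_n g 3) p1 p2 ->
    (forall x1 x2, S x1 x2 -> jac2 g J x1 x2 = 0) -> jac2 (jac2 g J) J p1 p2 <> 0 ->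
    locally_2d (fun x1 x2 => S x1 x2 -> x1 = p1 /\ x2 = p2) p1 p2).
  { intros g Cg hz hK.
    apply locally_2d_impl with (2 := differentiable_common_zero_isolated _ _ _ _ _ _ _ _
      (differentiable_pt_lim_of_ex_diff_n _ _ _ (CF g Cg))
      (differentiable_pt_lim_of_ex_diff_n _ _ _ CJ1) (zero _ (CF g Cg) hz) hJ hK).
    apply locally_2d_forall; intros x1 x2 Hiso hx. apply Hiso; [apply hz|apply HS]; exact hx. }
  destruct (Req_dec (jac2 F1 J p1 p2) 0) as [h1|h1].
  - apply (isolated g2 C2); [apply HS|].
    intros h2. apply (Hnd hJ); [apply zero; [apply CF, C1|apply HS]|
                                apply zero; [apply CF, C2|apply HS]|auto].
  - apply (isolated g1 C1); [apply HS|exact h1].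
Qed.

Lemma plane_map_folds_and_cusps (g1 g2 : R -> R -> R) (Dom V : R -> R -> Prop) r : 0 < r ->
  let J := jac2 g1 g2 in let F1 := jac2 g1 J in let F2 := jac2 g2 J in
  (forall x1 x2, inD r x1 x2 ->
     locally_2d (ex_diff_n g1 3) x1 x2 /\ locally_2d (ex_diff_n g2 3) x1 x2 /\
     (J x1 x2 = 0 -> F1 x1 x2 = 0 -> F2 x1 x2 = 0 ->
      ~ (jac2 F1 J x1 x2 = 0 /\ jac2 F2 J x1 x2 = 0))) ->
  (forall x1 x2, Dom x1 x2 ->
     inD r x1 x2 /\ (V x1 x2 <-> J x1 x2 = 0 /\ F1 x1 x2 = 0 /\ F2 x1 x2 = 0)) ->
  (forall x1 x2, Dom x1 x2 -> critical_pt g1 g2 x1 x2 ->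
     fold_pt g1 g2 x1 x2 \/ (Dom x1 x2 /\ V x1 x2)) /\
  (forall x1 x2, Dom x1 x2 /\ V x1 x2 -> cusp_pt g1 g2 x1 x2) /\
  (exists l : list (R * R), forall x1 x2, Dom x1 x2 /\ V x1 x2 -> In (x1, x2) l).
Proof.
  intros hr J F1 F2 Hreg HDom.
  assert (HSig : forall x1 x2, Dom x1 x2 /\ V x1 x2 ->
    inD r x1 x2 /\ J x1 x2 = 0 /\ F1 x1 x2 = 0 /\ F2 x1 x2 = 0).
  { intros x1 x2 [hD hV]. destruct (HDom x1 x2 hD) as [hx HV]. split; [exact hx|tauto]. }
  split; [|split].
  - intros x1 x2 hD hJ. destruct (classic (V x1 x2)) as [hV|hV]; [right; auto|left].
    apply fold_pt_intro; [exact hJ|]. intros [h1 h2]. apply hV, (HDom x1 x2 hD). auto.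
  - intros x1 x2 hS. destruct (HSig x1 x2 hS) as (hx & hJ & h1 & h2).
    apply cusp_pt_intro; auto. apply (Hreg x1 x2 hx); auto.
  - apply (cusp_candidates_finite g1 g2 _ r hr Hreg HSig).
Qed.

Theorem lemma6p3 (f1 f2 : R -> R -> R -> R) :
  analytic0 f1 -> analytic0 f2 ->
  f1 0 0 0 = 0 -> f2 0 0 0 = 0 ->
  let J := jac f1 f2 in
  let F1 := jac f1 J in
  let F2 := jac f2 J in
  finite_codim (tcoord :: f1 :: f2 :: nil) ->
  finite_codim (tcoord :: F1 :: F2 :: nil) ->
  J 0 0 0 = 0 ->
  finite_codim (tcoord :: dx1 J :: dx2 J :: nil) ->
  (* V(I') = {0} as germs *)
  near0 (fun t x1 x2 =>
    (J t x1 x2 = 0 /\ F1 t x1 x2 = 0 /\ F2 t x1 x2 = 0 /\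
     jac F1 J t x1 x2 = 0 /\ jac F2 J t x1 x2 = 0)
    <-> (t = 0 /\ x1 = 0 /\ x2 = 0)) ->
  exists rho, 0 < rho /\
  forall r0, 0 < r0 -> r0 < rho ->
  (forall x1 x2, inD r0 x1 x2 -> f1 0 x1 x2 = 0 -> f2 0 x1 x2 = 0 ->
     x1 = 0 /\ x2 = 0) ->
  forall VI : R -> R -> R -> Prop,
  (* VI is a representative of the zero-set germ V(I), I = <J,F1,F2> *)
  near0 (fun t x1 x2 =>
    VI t x1 x2 <-> (J t x1 x2 = 0 /\ F1 t x1 x2 = 0 /\ F2 t x1 x2 = 0)) ->
  exists delta0, 0 < delta0 /\
  forall delta, 0 < delta -> delta < delta0 ->
  exists tau, 0 < tau /\
  forall t, t <> 0 -> Rabs t < tau ->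
    let Dt := fun x1 x2 => inD r0 x1 x2 /\ inD delta (f1 t x1 x2) (f2 t x1 x2) in
    let Sigma := fun x1 x2 => Dt x1 x2 /\ VI t x1 x2 in
    (forall x1 x2, Dt x1 x2 -> critical_pt (f1 t) (f2 t) x1 x2 ->
       fold_pt (f1 t) (f2 t) x1 x2 \/ Sigma x1 x2) /\
    (forall x1 x2, Sigma x1 x2 -> cusp_pt (f1 t) (f2 t) x1 x2) /\
    (exists l : list (R * R), forall x1 x2, Sigma x1 x2 -> In (x1, x2) l).
Proof.
  (* Besides analyticity, only V(I') = {0} and the hypothesis on f_0^{-1}(0) are needed. *)
  intros hf1 hf2 _ _ J F1 F2 _ _ _ _ [e1 [he1 HV']].
  destruct (analytic0_common_radius f1 f2 hf1 hf2) as (rh & hrh & A1 & A2).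
  exists (Rmin rh e1); split; [apply Rmin_pos; auto|].
  intros r0 hr0 hr0rho hzero VI [e2 [he2 HVI]].
  apply Rmin_Rgt in hr0rho as [hr0rh hr0e1].
  assert (inbox : forall t x1 x2, Rabs t < rh -> inD r0 x1 x2 -> box rh t x1 x2)
    by (intros t x1 x2 ht hx; destruct (inD_abs r0 x1 x2); [lra|auto|repeat split; lra]).
  destruct (preimage_concentrates f1 f2 r0 e2) as (d0 & hd0 & Hconc); auto.
  { intros p1 p2 hp; split; apply (analytic_on_continuous3 rh); auto;
      apply inbox; auto; rewrite Rabs_R0; lra. }
  exists d0; split; [exact hd0|]. intros delta hdelta hdd.
  exists (Rmin (Rmin d0 e1) (Rmin e2 rh)); split; [repeat apply Rmin_pos; auto|].
  intros t ht0 ht Dt Sigma.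
  apply Rmin_Rgt in ht as [[htd0 hte1]%Rmin_Rgt [hte2 htrh]%Rmin_Rgt].
  apply (plane_map_folds_and_cusps (f1 t) (f2 t) Dt (VI t) r0 hr0).
  - intros x1 x2 hx. destruct (inD_abs r0 x1 x2) as [a1 a2]; [lra|exact hx|].
    split; [|split]; [apply (analytic_on_locally_ex_diff_n rh); auto..|].
    intros hJ h1 h2 [h3 h4]. apply ht0. apply (HV' t x1 x2); [lra..|tauto].
  - intros x1 x2 [hx hf]. split; [exact hx|].
    destruct (Hconc t x1 x2) as [a1 a2]; [lra|exact hx|apply inD_le with delta; [lra|exact hf]|].
    apply HVI; lra.
Qed.
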